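(* Let $(R,\mathfrak m,k)$ be a one-dimensional analytically irreducible local domain with canonical map $k\to\overline R/\mathfrak n$ an isomorphism, and suppose $R$ is not a discrete valuation ring. Let $S=\mathfrak m:\mathfrak m$, $\mathfrak c=R:\overline R$ the conductor of $R$, and $\mathfrak c_S=S:\overline S$ the conductor of $S$. Then $\ell_S(S/\mathfrak c_S)<\ell_R(R/\mathfrak c)$. Furthermore, $\ell_S(S/\mathfrak c_S)=\ell_R(R/\mathfrak c)-1$ if and only if $R$ has minimal multiplicity.
   Context: $\overline R$ is the integral closure of $R$ in $Q(R)$, assumed finitely generated over $R$ and local with maximal ideal $\mathfrak n$; $\overline S$ is the integral closure of $S$ (equal to $\overline R$). Colons are taken in $Q(R)$. $R$ has minimal multiplicity if $\mathfrak m^2=q\mathfrak m$ for a (any) minimal reduction $(q)$ of $\mathfrak m$. *)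

(* All rings/modules live inside a fixed field K,
   which plays the role of the quotient field Q(R). Subsets of K are
   Prop-valued predicates K -> Prop. *)
From mathcomp Require Import all_boot all_algebra.
Set Implicit Arguments. Unset Strict Implicit. Unset Printing Implicit Defensive.
Import GRing.Theory.
Local Open Scope ring_scope.

Section Defs.
Variable K : fieldType.
Definition kset := K -> Prop.

Definition incl (A B : kset) := forall x, A x -> B x.
Definition seteq (A B : kset) := forall x, A x <-> B x.

Definition subring (A : kset) :=
  [/\ A 1, forall x y, A x -> A y -> A (x - y) & forall x y, A x -> A y -> A (x * y)].

Definition frac_field_of (A : kset) :=
  forall x : K, exists a b, [/\ A a, A b, b != 0 & x = a / b].

Definition submod (A M : kset) :=
  [/\ M 0, forall x y, M x -> M y -> M (x + y) & forall a x, A a -> M x -> M (a * x)].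

Definition ideal (A I : kset) := submod A I /\ incl I A.

Definition fin_gen (A M : kset) :=
  exists gs : seq K, (forall g, g \in gs -> M g) /\
    forall x, M x -> exists cs : seq K, [/\ size cs = size gs, forall c, c \in cs -> A c
        & x = \sum_(i < size gs) cs`_i * gs`_i].

Definition noetherian (A : kset) := forall I, ideal A I -> fin_gen A I.

Definition principal (A : kset) (q : K) : kset := fun x => exists r, A r /\ x = r * q.

Definition unitIn (A : kset) (x : K) := [/\ A x, x != 0 & A x^-1].

(* the set of non-units of A (the maximal ideal when A is local) *)
Definition maxid (A : kset) : kset := fun x => A x /\ ~ unitIn A x.

Definition local (A : kset) :=
  forall x y, maxid A x -> maxid A y -> maxid A (x + y).

Definition prime_ideal (A P : kset) :=
  [/\ ideal A P, ~ P 1 & forall x y, A x -> A y -> P (x * y) -> P x \/ P y].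

(* Krull dimension one (for a local domain): not a field, and every
   nonzero prime ideal is the maximal ideal *)
Definition dim_one (A : kset) :=
  (exists x, maxid A x /\ x != 0) /\
  forall P, prime_ideal A P -> (exists x, P x /\ x != 0) -> incl (maxid A) P.

Definition intclos (A : kset) : kset := fun x =>
  exists p : {poly K}, [/\ p \is monic, forall i, A p`_i & root p x].

Definition colon (M N : kset) : kset := fun x => forall y, N y -> M (x * y).

Definition mulS (M N : kset) : kset := fun x =>
  exists s : seq (K * K), (forall p, p \in s -> M p.1 /\ N p.2) /\
     x = \sum_(p <- s) p.1 * p.2.

Fixpoint powS (A I : kset) (n : nat) : kset :=
  match n with 0 => A | n'.+1 => mulS I (powS A I n') end.

Definition reduction (A J I : kset) :=
  [/\ ideal A J, incl J I & exists n, seteq (mulS J (powS A I n)) (powS A I n.+1)].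

Definition minimal_reduction (A J I : kset) :=
  reduction A J I /\ forall J', reduction A J' I -> incl J' J -> seteq J' J.

Definition minimal_multiplicity (A : kset) :=
  exists q, minimal_reduction A (principal A q) (maxid A) /\
    seteq (mulS (maxid A) (maxid A)) (mulS (principal A q) (maxid A)).

Definition is_DVR (A : kset) :=
  [/\ local A, exists x, maxid A x /\ x != 0
    & forall I, ideal A I -> exists g, A g /\ seteq I (principal A g)].

(* canonical map k -> Rbar/n is an isomorphism (surjectivity; injectivity
   is automatic) *)
Definition residue_iso (A : kset) :=
  forall x, intclos A x -> exists r, A r /\ maxid (intclos A) (x - r).

Definition strict_chain (A : kset) (C : nat -> kset) (n : nat) (N M : kset) :=
  [/\ forall i, (i <= n)%N -> submod A (C i), seteq (C 0%N) N, seteq (C n) M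
    & forall i, (i < n)%N -> incl (C i) (C i.+1) /\ ~ incl (C i.+1) (C i)].

Definition has_length (A N M : kset) (n : nat) :=
  [/\ submod A N, submod A M, incl N M,
      exists C, strict_chain A C n N M
    & forall C k, strict_chain A C k N M -> (k <= n)%N].

End Defs.

(* Rbar is a discrete valuation ring: it is local and a finite R-module, and
   its maximal ideal is principal, generated by a/b where (a Rbar : b) is a
   maximal annihilator; this uses dim R = 1 and k = Rbar/nbar.  As the residue
   fields agree, for N <= M <= Rbar with N containing a power of the
   uniformizer, the length of M/N is the number of values of the valuation v
   taken on M but not on N.  So l(R/c) and l_S(S/c_S) count the values of R
   outside v(c) and of S outside v(c_S).  For x in m of least value,
   i |-> i + v x maps the latter injectively into the former minus 0, and onto
   exactly when m/x lies in S, i.e. when m^2 = x m. *)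

From HB Require Import structures.
From mathcomp Require Import all_boot all_algebra.
From mathcomp Require Import boolp ring.
Set Implicit Arguments. Unset Strict Implicit. Unset Printing Implicit Defensive.
Import GRing.Theory.
Local Open Scope ring_scope.

Section SubringsOfAField.
Variable K : fieldType.
Implicit Types (A I M N : kset K) (x y : K).

Lemma subring1 A : subring A -> A 1. Proof. by case. Qed.
Lemma subringB A x y : subring A -> A x -> A y -> A (x - y).
Proof. by case=> _ H _; apply: H. Qed.
Lemma subringM A x y : subring A -> A x -> A y -> A (x * y).
Proof. by case=> _ _ H; apply: H. Qed.
Lemma subring0 A : subring A -> A 0.
Proof. by move=> sA; rewrite -(subrr 1); apply: subringB (subring1 sA) (subring1 sA). Qed.
Lemma subringN A x : subring A -> A x -> A (- x).
Proof. by move=> sA Ax; rewrite -sub0r; apply: subringB (subring0 sA) Ax. Qed.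
Lemma subringD A x y : subring A -> A x -> A y -> A (x + y).
Proof. by move=> sA Ax Ay; rewrite -[y]opprK; apply: subringB Ax (subringN sA Ay). Qed.
Lemma subringX A x k : subring A -> A x -> A (x ^+ k).
Proof.
by move=> sA Ax; elim: k => [|k IH]; rewrite ?expr0 ?exprS; [apply: subring1 | apply: subringM].
Qed.
Lemma subring_sum A (I : Type) (r : seq I) (P : pred I) (F : I -> K) :
  subring A -> (forall i, P i -> A (F i)) -> A (\sum_(i <- r | P i) F i).
Proof. by move=> sA AF; apply: big_ind => //; [apply: subring0 | move=> x y; apply: subringD]. Qed.

Lemma submod0 A M : submod A M -> M 0. Proof. by case. Qed.
Lemma submodD A M x y : submod A M -> M x -> M y -> M (x + y).
Proof. by case=> _ H _; apply: H. Qed.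
Lemma submodM A M a x : submod A M -> A a -> M x -> M (a * x).
Proof. by case=> _ _ H; apply: H. Qed.
Lemma submodN A M x : subring A -> submod A M -> M x -> M (- x).
Proof. by move=> sA sM Mx; rewrite -mulN1r; apply: submodM sM (subringN sA (subring1 sA)) Mx. Qed.
Lemma submodB A M x y : subring A -> submod A M -> M x -> M y -> M (x - y).
Proof. by move=> sA sM Mx My; apply: submodD sM Mx (submodN sA sM My). Qed.
Lemma submod_sum A M (I : eqType) (r : seq I) (P : pred I) (F : I -> K) :
  submod A M -> (forall i, i \in r -> P i -> M (F i)) -> M (\sum_(i <- r | P i) F i).
Proof.
move=> sM MF; rewrite big_seq_cond; apply: big_ind => [|x y|i /andP[]]; last exact: MF.
  exact: submod0 sM.
exact: submodD sM.
Qed.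
Lemma submod_restrict A B M : incl B A -> submod A M -> submod B M.
Proof. by move=> BA [M0 MD MM]; split=> // a x Ba; apply: MM; apply: BA. Qed.
Lemma submodI A M N : submod A M -> submod A N -> submod A (fun x => M x /\ N x).
Proof.
move=> sM sN; split; first by split; [apply: submod0 sM | apply: submod0 sN].
  by move=> x y [Mx Nx] [My Ny]; split; [apply: submodD sM Mx My | apply: submodD sN Nx Ny].
by move=> a x Aa [Mx Nx]; split; [apply: submodM sM Aa Mx | apply: submodM sN Aa Nx].
Qed.
Lemma subring_submod A : subring A -> submod A A.
Proof. by move=> sA; split=> [|x y|a x]; [apply: subring0 | apply: subringD | apply: subringM]. Qed.

Lemma unitIn1 A : subring A -> unitIn A 1.
Proof. by move=> sA; split; rewrite ?invr1 ?oner_neq0 //; apply: subring1. Qed.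
Lemma unitIn_neq0 A x : unitIn A x -> x != 0. Proof. by case. Qed.
Lemma unitIn_mem A x : unitIn A x -> A x. Proof. by case. Qed.
Lemma unitInM A x y : subring A -> unitIn A x -> unitIn A y -> unitIn A (x * y).
Proof.
move=> sA [Ax xnz Axi] [Ay ynz Ayi]; split; rewrite ?mulf_neq0 //; first exact: subringM.
by rewrite invfM; apply: subringM.
Qed.
Lemma unitInV A x : unitIn A x -> unitIn A x^-1.
Proof. by case=> Ax xnz Axi; split; rewrite ?invrK // invr_eq0. Qed.

Lemma unitIn_maxidF A x : unitIn A x -> ~ maxid A x. Proof. by move=> u [_]. Qed.
Lemma unitIn_notmaxid A x : A x -> ~ maxid A x -> unitIn A x.
Proof. by move=> Ax nmx; case: (pselect (unitIn A x)) => // nu; case: nmx. Qed.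

Lemma maxid0 A : subring A -> maxid A 0.
Proof. by move=> sA; split; [apply: subring0 | case=> _; rewrite eqxx]. Qed.
Lemma maxidM A a x : subring A -> A a -> maxid A x -> maxid A (a * x).
Proof.
move=> sA Aa [Ax nux]; split; first exact: subringM.
case=> _ axnz Aaxi; move: axnz; rewrite mulf_eq0 negb_or => /andP[anz xnz].
apply: nux; split=> //; suff -> : x^-1 = a * (a * x)^-1 by apply: subringM.
by field; apply/andP.
Qed.
Lemma maxidN A x : subring A -> maxid A x -> maxid A (- x).
Proof. by move=> sA mx; rewrite -mulN1r; apply: maxidM (subringN sA (subring1 sA)) mx. Qed.
Lemma maxidB A x y : subring A -> local A -> maxid A x -> maxid A y -> maxid A (x - y).
Proof. by move=> sA lA mx my; apply: lA => //; apply: maxidN. Qed.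
Lemma ideal_maxid A : subring A -> local A -> ideal A (maxid A).
Proof.
move=> sA lA; split; last by move=> x [].
by split; [apply: maxid0 | apply: lA | move=> a x; apply: maxidM].
Qed.

Lemma principal_ideal A x : subring A -> A x -> ideal A (principal A x).
Proof.
move=> sA Ax; split; last by move=> y [r [Ar ->]]; apply: subringM.
split; first by exists 0; rewrite mul0r; split=> //; apply: subring0.
  move=> _ _ [r [Ar ->]] [s [As ->]]; exists (r + s); rewrite mulrDl.
  by split=> //; apply: subringD.
by move=> a _ Aa [r [Ar ->]]; exists (a * r); rewrite mulrA; split=> //; apply: subringM.
Qed.
Lemma principal_maxid A x : subring A -> maxid A x -> incl (principal A x) (maxid A).
Proof. by move=> sA mx _ [r [Ar ->]]; apply: maxidM. Qed.

Lemma mulS_mono M M' N N' : incl M M' -> incl N N' -> incl (mulS M N) (mulS M' N').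
Proof.
move=> MM' NN' _ [s [Hs ->]]; exists s; split=> // p /Hs [Mp Np].
by split; [apply: MM' | apply: NN'].
Qed.
Lemma mulS_seteq M M' N N' : seteq M M' -> seteq N N' -> seteq (mulS M N) (mulS M' N').
Proof.
move=> MM' NN' x; split; apply: mulS_mono => y; [exact: (MM' y).1 | exact: (NN' y).1 |
  exact: (MM' y).2 | exact: (NN' y).2].
Qed.
Lemma mulS1 A M x : subring A -> M x -> mulS M A x.
Proof.
move=> sA Mx; exists [:: (x, 1)]; rewrite big_seq1 mulr1; split=> // p.
by rewrite inE => /eqP -> /=; split=> //; apply: subring1.
Qed.
Lemma mulS_ideal A I : subring A -> ideal A I -> seteq (mulS I A) I.
Proof.
move=> sA [sI _] x; split; last exact: mulS1.
case=> s [Hs ->]; apply: (submod_sum sI) => p /Hs [Ip Ap] _.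
by rewrite mulrC; apply: submodM sI Ap Ip.
Qed.
Lemma mulS_pair M N x y : M x -> N y -> mulS M N (x * y).
Proof.
by move=> Mx Ny; exists [:: (x, y)]; rewrite big_seq1; split=> // p; rewrite inE => /eqP ->.
Qed.
Lemma powS_exp A I x k : subring A -> I x -> powS A I k (x ^+ k).
Proof.
move=> sA Ix; elim: k => [|k IH] /=; first by rewrite expr0; apply: subring1.
by rewrite exprS; apply: mulS_pair.
Qed.

Lemma strict_chain_mono A C k N M : strict_chain A C k N M ->
  forall i j, (i <= j)%N -> (j <= k)%N -> incl (C i) (C j).
Proof.
case=> _ _ _ C_step i j /subnK <-; elim: (j - i)%N => [|l IH] le y Ciy; first by rewrite add0n.
by rewrite addSn in le *; apply: (C_step _ le).1; apply: IH => //; apply: ltnW.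
Qed.

End SubringsOfAField.

Section IntegralClosure.
Variables (K : fieldType) (R : kset K).
Hypothesis sR : subring R.
Local Notation Rbar := (intclos R).

(* MathComp's [integralOver] needs a ring morphism, so R is packaged as the
   subring type [Rtype] of K with inclusion [val]. *)
Definition Rpred : {pred K} := fun x => `[< R x >].
Lemma Rpred_subring_closed : subring_closed Rpred.
Proof.
split; rewrite /Rpred /in_mem /=; first exact/asboolT/(subring1 sR).
  by move=> x y /asboolP Rx /asboolP Ry; apply/asboolT; apply: subringB.
by move=> x y /asboolP Rx /asboolP Ry; apply/asboolT; apply: subringM.
Qed.
HB.instance Definition _ := GRing.isSubringClosed.Build K Rpred Rpred_subring_closed.
Record Rtype := RT { rval : K; rvalP : rval \in Rpred }.
HB.instance Definition _ := [isSub for rval].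
HB.instance Definition _ := [Choice of Rtype by <:].
HB.instance Definition _ := [SubChoice_isSubComNzRing of Rtype by <:].
Local Notation vR := (val : {rmorphism Rtype -> K}).

Lemma RpredE x : (x \in Rpred) <-> R x.
Proof. by rewrite /Rpred /in_mem /=; split=> /asboolP. Qed.

Lemma intclosE x : Rbar x <-> integralOver vR x.
Proof.
split=> [[p [mp Rpc rp]]|[q mq rq]]; last first.
  exists (map_poly vR q); split; [exact: monic_map | move=> i | exact: rq].
  by rewrite coef_map; apply/RpredE; apply: valP.
pose q : {poly Rtype} := \poly_(i < size p) insubd (0 : Rtype) p`_i.
have qp : map_poly vR q = p.
  apply/polyP=> i; rewrite coef_map coef_poly /=.
  by case: ltnP => Hi; [rewrite insubdK //; apply/RpredE | rewrite nth_default].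
exists q; last by rewrite qp.
rewrite monicE; apply/eqP/val_inj => /=.
by have := lead_coef_map_inj val_inj (rmorph0 vR) q; rewrite qp => <-; apply/eqP.
Qed.

Lemma intclos_incl : incl R Rbar.
Proof.
move=> x Rx; apply/intclosE.
have -> : x = vR (insubd (0 : Rtype) x) by rewrite /= insubdK //; apply/RpredE.
exact: integral_id.
Qed.

Lemma subring_intclos : subring Rbar.
Proof.
split; first exact/intclos_incl/(subring1 sR).
  by move=> x y /intclosE Rx /intclosE Ry; apply/intclosE/integral_sub.
by move=> x y /intclosE Rx /intclosE Ry; apply/intclosE/integral_mul.
Qed.

Lemma intclos_root (p : {poly K}) x :
  p \is monic -> (forall i, Rbar p`_i) -> root p x -> Rbar x.
Proof.
move=> mp Rbar_p rp; apply/intclosE/(integral_root_monic mp rp).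
by move=> _ /(nthP 0) [i _ <-]; apply/intclosE.
Qed.

Lemma intclos_horner (q : {poly K}) x : (forall i, R q`_i) -> Rbar x -> Rbar q.[x].
Proof.
move=> Rq Rbx; rewrite horner_coef; apply: subring_sum subring_intclos _ => i _.
exact/(subringM subring_intclos (intclos_incl (Rq i)))/(subringX _ subring_intclos).
Qed.

Lemma intclos_intermediate A : incl R A -> incl A Rbar -> seteq (intclos A) Rbar.
Proof.
move=> RA ARbar x; split=> [[p [mp Apc rp]]|[p [mp Rpc rp]]].
  by apply: (intclos_root mp) rp => i; apply: ARbar.
by exists p; split=> // i; apply: RA.
Qed.

Lemma unitIn_intclos x : unitIn R x -> unitIn Rbar x.
Proof. by case=> Rx xnz Rxi; split=> //; apply: intclos_incl. Qed.

(* Determinant trick: z is an eigenvalue of a matrix over R, hence a root of its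
   characteristic polynomial. *)
Lemma intclos_det_trick (gs : seq K) (z : K) :
  has (fun g => g != 0) gs ->
  (forall i, (i < size gs)%N -> exists cs : seq K,
      [/\ size cs = size gs, forall c, c \in cs -> R c
        & z * gs`_i = \sum_(j < size gs) cs`_j * gs`_j]) ->
  Rbar z.
Proof.
move=> /hasP [g gs_g gnz] zgs; pose n := size gs.
have [f Hf] := choice (fun i : 'I_n => zgs i (ltn_ord i)).
have Rf i j : R (f i)`_j.
  have [_ Rc _] := Hf i; have [lt|ge] := ltnP j (size (f i)).
    exact/Rc/mem_nth.
  by rewrite nth_default //; apply: subring0.
pose B : 'M[Rtype]_n := \matrix_(j, i) insubd (0 : Rtype) (f i)`_j.
pose vg : 'rV[K]_n := \row_i gs`_i.
have Bv : vg *m map_mx vR B = z *: vg.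
  apply/rowP=> i; rewrite !mxE; have [_ _ ->] := Hf i.
  apply: eq_bigr => j _; rewrite !mxE /= insubdK; first exact: mulrC.
  exact/RpredE.
have vnz : vg != 0.
  apply: contraNneq gnz => /rowP vg0; move: gs_g => /(nthP 0) [i ilt <-].
  by have := vg0 (Ordinal ilt); rewrite !mxE => ->.
have : eigenvalue (map_mx vR B) z by apply/eigenvalueP; exists vg.
rewrite eigenvalue_root_char -map_char_poly => rz.
by apply/intclosE; exists (char_poly B); rewrite ?char_poly_monic.
Qed.

End IntegralClosure.

Section NoetherianDomain.
Variables (K : fieldType) (R : kset K).
Hypotheses (sR : subring R) (R_frac : frac_field_of R) (R_noeth : noetherian R).
Hypothesis Rbar_fin : fin_gen R (intclos R).
Local Notation Rbar := (intclos R).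
Implicit Types (M N : kset K).

Lemma fin_gen_denominator M : fin_gen R M -> exists2 d, d != 0 & colon R M d.
Proof.
case=> gs [_ Mgs].
suff [d [_ dnz dgs]] : exists d, [/\ R d, d != 0 & forall g, g \in gs -> R (d * g)].
  exists d => // _ /Mgs [cs [sz Rcs ->]]; rewrite mulr_sumr.
  apply: subring_sum sR _ => i _; rewrite mulrCA.
  by apply: subringM sR _ (dgs _ (mem_nth 0 _)) => //; apply: Rcs; apply: mem_nth; rewrite sz.
elim: gs {Mgs} => [|g gs [d [Rd dnz dgs]]].
  by exists 1; rewrite oner_neq0; split=> //; apply: subring1.
have [a [b [Ra Rb bnz ->]]] := R_frac g.
exists (d * b); split; [exact: subringM | exact: mulf_neq0 |].
move=> h; rewrite inE => /orP [/eqP -> | gs_h]; last first.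
  by rewrite mulrAC; apply: subringM sR (dgs _ gs_h) Rb.
have -> : d * b * (a / b) = d * a by field.
exact: subringM.
Qed.

Definition scaleS (d : K) M : kset K := fun y => exists u, M u /\ y = d * u.

Lemma ideal_scaleS d M : submod R M -> colon R M d -> ideal R (scaleS d M).
Proof.
move=> sM dM; split; last by move=> _ [u [Mu ->]]; apply: dM.
split; first by exists 0; rewrite mulr0; split=> //; apply: submod0 sM.
  move=> _ _ [u [Mu ->]] [w [Mw ->]]; exists (u + w); rewrite mulrDr.
  by split=> //; apply: submodD sM Mu Mw.
by move=> a _ Ra [u [Mu ->]]; exists (a * u); rewrite mulrCA; split=> //; apply: submodM sM Ra Mu.
Qed.

Lemma fin_gen_scaleS d M : d != 0 -> fin_gen R (scaleS d M) -> fin_gen R M.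
Proof.
move=> dnz [gs [gsM Mgs]]; exists [seq g / d | g <- gs]; split.
  by move=> _ /mapP [g /gsM [u [Mu ->]] ->]; rewrite mulrC mulKf.
move=> x Mx; have [|cs [sz Rcs dx]] := Mgs (d * x); first by exists x.
exists cs; rewrite size_map; split=> //; apply: (mulfI dnz); rewrite dx mulr_sumr.
apply: eq_bigr => i _; rewrite (nth_map 0) //; field; exact: dnz.
Qed.

Lemma fin_gen_intclos_submod M : submod R M -> incl M Rbar -> fin_gen R M.
Proof.
move=> sM MRbar; have [d dnz dRbar] := fin_gen_denominator Rbar_fin.
apply: (fin_gen_scaleS dnz); apply/R_noeth/(ideal_scaleS sM).
by move=> y My; apply/dRbar/MRbar.
Qed.

Lemma intclos_of_stable_fin_gen M z : fin_gen R M -> (exists y, M y /\ y != 0) ->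
  (forall y, M y -> M (z * y)) -> Rbar z.
Proof.
move=> [gs [gsM Mgs]] [y [My ynz]] zM; apply: (@intclos_det_trick _ _ sR gs).
  apply: contraTT ynz => /hasPn gs0; rewrite negbK; have [cs [_ _ ->]] := Mgs y My.
  by apply/eqP/big1 => i _; rewrite (eqP (negbNE (gs0 _ (mem_nth 0 (ltn_ord i))))) mulr0.
by move=> i lti; apply/Mgs/zM/gsM/mem_nth.
Qed.

Lemma intclos_of_stable M z : submod R M -> incl M Rbar -> (exists y, M y /\ y != 0) ->
  (forall y, M y -> M (z * y)) -> Rbar z.
Proof. by move=> sM MRbar; apply/intclos_of_stable_fin_gen/fin_gen_intclos_submod. Qed.

Lemma intclos_chain_stationary (M : nat -> kset K) : (forall i, submod R (M i)) ->
  (forall i, incl (M i) Rbar) -> (forall i, incl (M i) (M i.+1)) ->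
  exists k, incl (M k.+1) (M k).
Proof.
move=> sM MRbar Mi_incl.
have M_mono i j : (i <= j)%N -> incl (M i) (M j).
  move=> /subnK <-; elim: (j - i)%N => //= k IH y /IH; rewrite addSn; exact: Mi_incl.
pose U y := exists i, M i y.
have sU : submod R U.
  split; first by exists 0%N; apply: submod0 (sM 0%N).
    move=> x y [i Mix] [j Mjy]; exists (maxn i j); apply: submodD (sM _) _ _.
      exact: M_mono (leq_maxl i j) _ Mix.
    exact: M_mono (leq_maxr i j) _ Mjy.
  by move=> a x Ra [i Mix]; exists i; apply: submodM (sM i) Ra Mix.
have URbar : incl U Rbar by move=> y [i Miy]; apply: (MRbar i).
have [gs [gsU Ugs]] := fin_gen_intclos_submod sU URbar.
have [k gsMk] : exists k, forall g, g \in gs -> M k g.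
  elim: gs {Ugs} gsU => [|g gs IH] gsU; first by exists 0%N.
  have [k gsMk] := IH (fun h gs_h => gsU h (mem_behead (s := g :: gs) gs_h)).
  have [i Mig] := gsU g (mem_head g gs).
  exists (maxn k i) => h; rewrite inE => /orP [/eqP -> | gs_h].
    exact: M_mono (leq_maxr k i) _ Mig.
  exact: M_mono (leq_maxl k i) _ (gsMk h gs_h).
exists k => y Mky; have [|cs [sz Rcs ->]] := Ugs y; first by exists k.+1.
apply: submod_sum (sM k) _ => i _ _; apply: submodM (sM k) _ (gsMk _ (mem_nth 0 _)) => //.
by apply: Rcs; apply: mem_nth; rewrite sz.
Qed.

Lemma intclos_maximal_elt (X : K -> Prop) (F : K -> kset K) b0 :
  (forall b, submod R (F b)) -> (forall b, incl (F b) Rbar) -> X b0 ->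
  exists b, X b /\ forall b', X b' -> incl (F b) (F b') -> incl (F b') (F b).
Proof.
move=> sF FRbar Xb0; apply: contrapT => nomax.
have step b : exists b', X b -> [/\ X b', incl (F b) (F b') & ~ incl (F b') (F b)].
  case: (pselect (X b)) => Xb; last by exists b.
  apply: contrapT => H; apply: nomax; exists b; split=> // b' Xb' Fbb'.
  by apply: contrapT => Fb'b; apply: H; exists b'.
have [f Hf] := choice step.
pose s k := iter k f b0.
have Xs k : X (s k) by elim: k => //= k IH; case: (Hf _ IH).
have Fs k : incl (F (s k)) (F (s k.+1)) by case: (Hf _ (Xs k)).
have [k Hk] := @intclos_chain_stationary (F \o s) (fun k => sF _) (fun k => FRbar _) Fs.
by case: (Hf _ (Xs k)) => _ _; apply.
Qed.

End NoetherianDomain.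

Section Uniformizer.
Variables (K : fieldType) (R : kset K).
Hypotheses (sR : subring R) (R_frac : frac_field_of R) (R_noeth : noetherian R).
Hypotheses (R_local : local R) (R_dim : dim_one R).
Hypotheses (Rbar_fin : fin_gen R (intclos R)) (Rbar_local : local (intclos R)).
Hypothesis R_residue : residue_iso R.
Local Notation Rbar := (intclos R).
Local Notation m := (maxid R).
Local Notation nbar := (maxid Rbar).
Local Notation sRbar := (subring_intclos sR).

Lemma maxid_intclos_contract x : R x -> nbar x -> m x.
Proof. by move=> Rx [_ nux]; split=> // ux; apply/nux/unitIn_intclos. Qed.

(* If x in m were a unit of Rbar, then x^-1 = s + (element of nbar) for some
   s in R, so 1 - x s would be a non-unit of Rbar lying in R, i.e. in m. *)
Lemma maxid_sub_intclos : incl m nbar.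
Proof.
move=> x [Rx nux]; split; first exact: (intclos_incl sR Rx).
case=> _ xnz Rbar_xi; have [s [Rs nbar_s]] := R_residue Rbar_xi.
have nbar_1xs : nbar (1 - x * s).
  have -> : 1 - x * s = x * (x^-1 - s) by field.
  exact: (maxidM sRbar (intclos_incl sR Rx) nbar_s).
have m_xs : m (x * s) by rewrite mulrC; apply: maxidM.
have R_1xs : R (1 - x * s) by apply: subringB sR (subring1 sR) (subringM sR Rx Rs).
have m_1xs : m (1 - x * s).
  split=> // u1xs; exact: unitIn_maxidF (unitIn_intclos sR u1xs) nbar_1xs.
have := R_local m_xs m_1xs; rewrite addrC subrK.
exact/unitIn_maxidF/unitIn1.
Qed.

Section Annihilator.
Variable a : K.
Hypotheses (nbar_a : nbar a) (a_neq0 : a != 0).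

Definition ann b : kset K := fun z => Rbar z /\ principal Rbar a (z * b).

Lemma submod_ann b : submod Rbar (ann b).
Proof.
split.
- split; first exact: subring0 sRbar.
  by exists 0; rewrite !mul0r; split=> //; apply: subring0 sRbar.
- move=> x y [Rbx [r [Rbr xb]]] [Rby [s [Rbs yb]]]; split; first exact: subringD sRbar Rbx Rby.
  by exists (r + s); rewrite mulrDl xb yb mulrDl; split=> //; apply: subringD sRbar Rbr Rbs.
- move=> c x Rbc [Rbx [r [Rbr xb]]]; split; first exact: subringM sRbar Rbc Rbx.
  by exists (c * r); rewrite -mulrA xb mulrA; split=> //; apply: subringM sRbar Rbc Rbr.
Qed.

Lemma ann_mul b x : Rbar x -> incl (ann b) (ann (x * b)).
Proof.
move=> Rbx z [Rbz [r [Rbr zb]]]; split=> //.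
by exists (x * r); rewrite mulrCA zb mulrA; split=> //; apply: subringM sRbar Rbx Rbr.
Qed.

Definition ann_candidate b := Rbar b /\ ~ principal Rbar a b.
Definition ann_maximal b := ann_candidate b /\
  forall b', ann_candidate b' -> incl (ann b) (ann b') -> incl (ann b') (ann b).

Lemma exists_maximal_ann : exists b, ann_maximal b.
Proof.
have cand1 : ann_candidate 1.
  split; first exact: subring1 sRbar.
  case=> r [Rbr r_a]; apply: (unitIn_maxidF _ nbar_a); split=> //; first by case: nbar_a.
  by have -> : a^-1 = r by apply: (mulfI a_neq0); rewrite mulfV // [RHS]mulrC -r_a.
apply: (intclos_maximal_elt sR R_frac R_noeth Rbar_fin _ _ cand1) => [b|b z []//].
exact: submod_restrict (intclos_incl sR) (submod_ann b).
Qed.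

Section MaximalAnnihilator.
Variable b : K.
Hypothesis b_maximal : ann_maximal b.
Let b_cand : ann_candidate b := b_maximal.1.
Let b_max := b_maximal.2.

Lemma ann_prime x y : Rbar x -> Rbar y -> ann b (x * y) -> ~ ann b x -> ann b y.
Proof.
move=> Rbx Rby [_ xyb] nxb.
have cand_xb : ann_candidate (x * b).
  by split; [apply: subringM sRbar Rbx b_cand.1 | move=> ?; apply: nxb].
apply: (b_max cand_xb (ann_mul Rbx)); split=> //.
by rewrite mulrA (mulrC y).
Qed.

Lemma ann_sub_nbar : incl (ann b) nbar.
Proof.
move=> z [Rbz [r [Rbr zb]]]; split=> // [[_ znz Rbzi]]; apply: b_cand.2.
exists (z^-1 * r); rewrite -mulrA -zb mulrA mulVf ?mul1r //; split=> //.
exact: subringM sRbar Rbzi Rbr.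
Qed.

Lemma maxid_sub_ann : incl m (ann b).
Proof.
pose Q z := R z /\ ann b z.
have Q_prime : prime_ideal R Q.
  split.
  - split; last by move=> ? [].
    exact: submodI (subring_submod sR) (submod_restrict (intclos_incl sR) (submod_ann b)).
  - by case=> _ [_]; rewrite mul1r; apply: b_cand.2.
  - move=> x y Rx Ry [_ Axy]; case: (pselect (ann b x)) => Ax; first by left.
    by right; split=> //; apply: ann_prime Axy Ax; apply: (intclos_incl sR).
have [d dnz dRbar] := fin_gen_denominator sR R_frac Rbar_fin.
suff /(R_dim.2 Q Q_prime) mQ : exists z, Q z /\ z != 0 by move=> x /mQ [].
exists (d * a); split; last exact: mulf_neq0.
split; first by apply: dRbar; case: nbar_a.
have Rd : R d by rewrite -[d]mulr1; apply/dRbar/(subring1 sRbar).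
apply: (submodM (submod_ann b) (intclos_incl sR Rd)); split; first by case: nbar_a.
by exists b; rewrite mulrC; split=> //; case: b_cand.
Qed.

(* Along a monic equation of y over R, an element of nbar outside the prime
   [ann b] forces every coefficient into m, the leading 1 included. *)
Lemma coef_maxid_of_ann_horner y (q : {poly K}) : nbar y -> ~ ann b y ->
  (forall i, R q`_i) -> ann b q.[y] -> forall i, m q`_i.
Proof.
move=> nbar_y Py; elim/poly_ind: q => [_ _ i|q c IH Rqc Pqc i].
  by rewrite coef0; apply: maxid0.
have Rc : R c by have := Rqc 0%N; rewrite -cons_poly_def coef_cons.
have Rq j : R q`_j by have := Rqc j.+1; rewrite -cons_poly_def coef_cons.
have Rbar_qy : Rbar q.[y] := intclos_horner sR Rq nbar_y.1.
rewrite hornerMXaddC in Pqc.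
have mc : m c.
  apply: maxid_intclos_contract Rc _.
  have -> : c = (q.[y] * y + c) - q.[y] * y by rewrite addrC addKr.
  exact: maxidB sRbar Rbar_local (ann_sub_nbar Pqc) (maxidM sRbar Rbar_qy nbar_y).
have Pqy : ann b q.[y].
  apply: (ann_prime nbar_y.1 Rbar_qy) => //.
  have -> : y * q.[y] = (q.[y] * y + c) - c by rewrite addrK mulrC.
  exact: submodB sRbar (submod_ann b) Pqc (maxid_sub_ann mc).
rewrite -cons_poly_def coef_cons; case: eqP => _; [exact: mc | exact: IH].
Qed.

Lemma nbar_sub_ann : incl nbar (ann b).
Proof.
move=> y nbar_y; apply: contrapT => Py; have [p [mp Rpred rp]] := nbar_y.1.
have := coef_maxid_of_ann_horner nbar_y Py Rpred _ (size p).-1.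
rewrite -lead_coefE (eqP mp) => m1; apply: (unitIn_maxidF (unitIn1 sR)); apply: m1.
by rewrite (eqP rp); apply: submod0 (submod_ann b).
Qed.

End MaximalAnnihilator.

Lemma nbar_scaled_intclos b : ann_maximal b -> forall y, nbar y -> Rbar (b / a * y).
Proof.
move=> b_maximal y /(nbar_sub_ann b_maximal) [_ [w [Rbw yb]]].
have -> : b / a * y = y * b / a by ring.
by rewrite yb mulfK.
Qed.

End Annihilator.

(* The maximal annihilator [ann b] is all of nbar, so (b/a) nbar lies in
   Rbar but not in nbar; a unit (b/a) y then exhibits a/b as a generator. *)
Lemma exists_uniformizer :
  exists t, [/\ nbar t, t != 0 & forall z, nbar z -> exists2 u, Rbar u & z = t * u].
Proof.
have [a [m_a a_neq0]] := R_dim.1; have nbar_a := maxid_sub_intclos m_a.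
have [b b_maximal] := exists_maximal_ann nbar_a a_neq0.
have scaled := nbar_scaled_intclos nbar_a a_neq0 b_maximal.
have [b_cand _] := b_maximal.
have b_neq0 : b != 0.
  apply: contra_notN b_cand.2 => /eqP ->.
  by exists 0; rewrite mul0r; split=> //; apply: subring0 sRbar.
have [y [nbar_y nbar_ay]] : exists y, nbar y /\ ~ nbar (b / a * y).
  apply: contrapT => all_nbar; apply: b_cand.2; exists (b / a); rewrite divfK //.
  split=> //; apply: (intclos_of_stable sR R_frac R_noeth Rbar_fin (M := nbar)).
  - exact: submod_restrict (intclos_incl sR) (ideal_maxid sRbar Rbar_local).1.
  - by move=> z [].
  - by exists a.
  - by move=> z nbar_z; apply: contrapT => nz; apply: all_nbar; exists z.
have u_w := unitIn_notmaxid (scaled y nbar_y) nbar_ay.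
have y_neq0 : y != 0 by apply: contraTneq (unitIn_neq0 u_w) => ->; rewrite mulr0 eqxx.
exists (a / b); split.
- have -> : a / b = (b / a * y)^-1 * y by field; rewrite a_neq0 b_neq0 y_neq0.
  exact: maxidM sRbar (unitIn_mem (unitInV u_w)) nbar_y.
- by rewrite mulf_neq0 ?invr_eq0.
- by move=> z nbar_z; exists (b / a * z); [apply: scaled | field; rewrite a_neq0 b_neq0].
Qed.

End Uniformizer.

Section Valuation.
Variables (K : fieldType) (R : kset K).
Hypotheses (sR : subring R) (R_frac : frac_field_of R) (R_noeth : noetherian R).
Hypotheses (Rbar_fin : fin_gen R (intclos R)) (Rbar_local : local (intclos R)).
Hypothesis R_residue : residue_iso R.
Local Notation Rbar := (intclos R).
Local Notation m := (maxid R).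
Local Notation nbar := (maxid Rbar).
Local Notation sRbar := (subring_intclos sR).

Variable t : K.
Hypotheses (t_nbar : nbar t) (t_neq0 : t != 0).
Hypothesis nbar_tmul : forall z, nbar z -> exists2 u, Rbar u & z = t * u.

Local Notation t_ideal k := (principal Rbar (t ^+ k)).

Lemma tX_neq0 k : t ^+ k != 0. Proof. exact: expf_neq0. Qed.
Lemma intclos_t : Rbar t. Proof. by case: t_nbar. Qed.
Lemma intclos_tX k : Rbar (t ^+ k). Proof. exact: subringX sRbar intclos_t. Qed.
Lemma intclos_tV : ~ Rbar t^-1.
Proof. by move=> Rbar_ti; apply: (unitIn_maxidF _ t_nbar); split=> //; apply: intclos_t. Qed.

(* Krull's intersection theorem for Rbar: otherwise t^-1 would stabilise the
   submodule generated by all the y / t^k. *)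
Lemma exists_divX_notin y : Rbar y -> y != 0 -> exists k, ~ Rbar (y / t ^+ k).
Proof.
move=> Rbar_y y_neq0; apply: contrapT => H.
have Rbar_div k : Rbar (y / t ^+ k) by apply: contrapT => h; apply: H; exists k.
pose M z := exists k w, Rbar w /\ z = y / t ^+ k * w.
apply: intclos_tV; apply: (intclos_of_stable sR R_frac R_noeth Rbar_fin (M := M)).
- split; first by exists 0%N, 0; rewrite mulr0; split=> //; apply: subring0 sRbar.
    move=> _ _ [k [w1 [R1 ->]]] [j [w2 [R2 ->]]].
    exists (k + j)%N, (w1 * t ^+ j + w2 * t ^+ k); split.
      by apply: subringD sRbar _ _; apply: subringM sRbar _ (intclos_tX _).
    by have := tX_neq0 k; have := tX_neq0 j; rewrite exprD => hj hk; field; rewrite hj hk.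
  move=> r _ Rr [k [w [Rw ->]]]; exists k, (r * w); split; last by ring.
  exact: subringM sRbar (intclos_incl sR Rr) Rw.
- by move=> _ [k [w [Rw ->]]]; apply: subringM sRbar (Rbar_div k) Rw.
- exists y; split=> //; exists 0%N, 1; rewrite expr0 divr1 mulr1.
  by split=> //; apply: subring1 sRbar.
- move=> _ [k [w [Rw ->]]]; exists k.+1, w; split=> //.
  by have := tX_neq0 k; rewrite exprS => hk; field; rewrite hk t_neq0.
Qed.

(* [v y] is the largest k with y / t^k in Rbar; it is a junk 0 when y = 0 or
   y is not in Rbar. *)
Definition v (y : K) : nat :=
  match pselect (exists k, ~~ `[< Rbar (y / t ^+ k.+1) >]) with
  | left ex => ex_minn ex
  | right _ => 0%N
  end.

Lemma intclos_divXW y i j : (i <= j)%N -> Rbar (y / t ^+ j) -> Rbar (y / t ^+ i).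
Proof.
move=> /subnK <- Rbar_yj.
have -> : y / t ^+ i = y / t ^+ (j - i + i) * t ^+ (j - i).
  by have := tX_neq0 i; have := tX_neq0 (j - i); rewrite exprD => h1 h2; field; rewrite h1 h2.
exact: subringM sRbar Rbar_yj (intclos_tX _).
Qed.

Lemma intclos_divXP y k : Rbar y -> y != 0 -> Rbar (y / t ^+ k) <-> (k <= v y)%N.
Proof.
move=> Rbar_y y_neq0.
have ex : exists k, ~~ `[< Rbar (y / t ^+ k.+1) >].
  case: (exists_divX_notin Rbar_y y_neq0) => [[|j] Hj].
    by case: Hj; rewrite expr0 divr1.
  by exists j; apply/asboolPn.
rewrite /v; case: pselect => [ex'|/(_ ex) //].
case: ex_minnP => n /asboolPn n_notin n_min; split=> [Rbar_yk|].
  by rewrite leqNgt; apply/negP => lt; apply/n_notin/(intclos_divXW lt).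
case: k => [|k] le; first by rewrite expr0 divr1.
apply/asboolP; apply: contraTT le; rewrite -ltnNge ltnS => /n_min.
by rewrite -ltnS.
Qed.

Lemma unitIn_div_tv y : Rbar y -> y != 0 -> unitIn Rbar (y / t ^+ v y).
Proof.
move=> Rbar_y y_neq0; have Rbar_yv : Rbar (y / t ^+ v y) by apply/intclos_divXP.
apply: unitIn_notmaxid Rbar_yv _ => /nbar_tmul [u Rbar_u yv].
suff /(intclos_divXP _ Rbar_y y_neq0) : Rbar (y / t ^+ (v y).+1) by rewrite ltnn.
suff -> : y / t ^+ (v y).+1 = u by [].
apply: (mulfI t_neq0); rewrite -yv exprS.
by have := tX_neq0 (v y); move: (t ^+ v y) => p p_neq0; field; rewrite p_neq0 t_neq0.
Qed.

Lemma tX_unit_decomp y : Rbar y -> y != 0 -> exists2 u, unitIn Rbar u & y = t ^+ v y * u.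
Proof.
move=> Rbar_y y_neq0; exists (y / t ^+ v y); first exact: unitIn_div_tv.
by rewrite mulrC divfK // tX_neq0.
Qed.

Lemma v_tX_unit y k u : unitIn Rbar u -> y = t ^+ k * u -> v y = k.
Proof.
move=> u_unit y_eq.
have Rbar_y : Rbar y by rewrite y_eq; apply: subringM sRbar (intclos_tX k) (unitIn_mem u_unit).
have y_neq0 : y != 0 by rewrite y_eq mulf_neq0 ?tX_neq0 ?(unitIn_neq0 u_unit).
apply/eqP; rewrite eqn_leq; apply/andP; split; last first.
  apply/(intclos_divXP _ Rbar_y y_neq0); rewrite y_eq mulrC mulKf ?tX_neq0 //.
  exact: unitIn_mem u_unit.
rewrite leqNgt; apply/negP => /(intclos_divXP _ Rbar_y y_neq0) Rbar_yk; apply: intclos_tV.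
have -> : t^-1 = u^-1 * (y / t ^+ k.+1).
  rewrite y_eq exprS; have := tX_neq0 k; have := unitIn_neq0 u_unit => h1 h2.
  by field; rewrite h1 h2 t_neq0.
exact: subringM sRbar (unitIn_mem (unitInV u_unit)) Rbar_yk.
Qed.

Lemma vM y z : Rbar y -> y != 0 -> Rbar z -> z != 0 -> v (y * z) = (v y + v z)%N.
Proof.
move=> Rbar_y y_neq0 Rbar_z z_neq0.
have [u u_unit y_eq] := tX_unit_decomp Rbar_y y_neq0.
have [w w_unit z_eq] := tX_unit_decomp Rbar_z z_neq0.
apply: (v_tX_unit (unitInM sRbar u_unit w_unit)).
by rewrite {1}y_eq {1}z_eq exprD; move: (t ^+ v y) (t ^+ v z) => p q; ring.
Qed.

Lemma v_unitIn u : unitIn Rbar u -> v u = 0%N.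
Proof. by move=> u_unit; apply: (v_tX_unit u_unit); rewrite expr0 mul1r. Qed.

Lemma vX x n : Rbar x -> x != 0 -> v (x ^+ n) = (n * v x)%N.
Proof.
move=> Rbar_x x_neq0; elim: n => [|n IH]; first by rewrite expr0 (v_unitIn (unitIn1 sRbar)).
by rewrite exprS vM ?IH ?mulSn ?expf_neq0 //; apply: subringX sRbar Rbar_x.
Qed.

Lemma intclos_divP y z : Rbar y -> y != 0 -> Rbar z -> z != 0 ->
  Rbar (z / y) <-> (v y <= v z)%N.
Proof.
move=> Rbar_y y_neq0 Rbar_z z_neq0; split=> [Rbar_zy|].
  have zy_neq0 : z / y != 0 by rewrite mulf_neq0 ?invr_eq0.
  by rewrite -[z](divfK y_neq0) mulrC vM // leq_addr.
move/(intclos_divXP _ Rbar_z z_neq0) => Rbar_zv.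
have -> : z / y = (z / t ^+ v y) * (y / t ^+ v y)^-1.
  by rewrite invf_div mulrA divfK // tX_neq0.
exact: subringM sRbar Rbar_zv (unitIn_mem (unitInV (unitIn_div_tv Rbar_y y_neq0))).
Qed.

Lemma v_div y z : Rbar y -> y != 0 -> Rbar z -> z != 0 -> (v y <= v z)%N ->
  [/\ Rbar (z / y), z / y != 0 & v (z / y) = (v z - v y)%N].
Proof.
move=> Rbar_y y_neq0 Rbar_z z_neq0 le; have Rbar_zy : Rbar (z / y) by apply/intclos_divP.
have zy_neq0 : z / y != 0 by rewrite mulf_neq0 ?invr_eq0.
by split=> //; rewrite -{2}[z](divfK y_neq0) (vM Rbar_zy zy_neq0 Rbar_y y_neq0) addnK.
Qed.

Lemma t_idealP k z : Rbar z -> z != 0 -> t_ideal k z <-> (k <= v z)%N.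
Proof.
move=> Rbar_z z_neq0; rewrite -(intclos_divXP _ Rbar_z z_neq0); split=> [[w [Rbar_w ->]]|].
  by rewrite mulfK ?tX_neq0.
by exists (z / t ^+ k); rewrite divfK ?tX_neq0.
Qed.

Lemma submod_t_ideal k : submod Rbar (t_ideal k).
Proof. exact: (principal_ideal sRbar (intclos_tX k)).1. Qed.

Lemma t_ideal_mono j k : (j <= k)%N -> incl (t_ideal k) (t_ideal j).
Proof.
move=> /subnK <- _ [w [Rbar_w ->]]; exists (w * t ^+ (k - j)).
by rewrite exprD mulrA; split=> //; apply: subringM sRbar Rbar_w (intclos_tX _).
Qed.

Lemma t_idealM j k y z : t_ideal j y -> t_ideal k z -> t_ideal (j + k) (y * z).
Proof.
move=> [w1 [R1 ->]] [w2 [R2 ->]]; exists (w1 * w2); rewrite exprD.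
by split; [apply: subringM sRbar R1 R2 | ring].
Qed.

Lemma nbar_t_ideal1 z : nbar z <-> t_ideal 1 z.
Proof.
split=> [/nbar_tmul [u Rbar_u ->]|[w [Rbar_w ->]]]; first by exists u; rewrite expr1 mulrC.
by rewrite expr1; apply: maxidM sRbar Rbar_w t_nbar.
Qed.

(* Since k = Rbar/nbar, z/y is congruent to some r in R modulo nbar. *)
Lemma residue_approx y z : Rbar y -> y != 0 -> Rbar z -> z != 0 -> v y = v z ->
  exists r, R r /\ t_ideal (v y).+1 (y - r * z).
Proof.
move=> Rbar_y y_neq0 Rbar_z z_neq0 vyz.
have Rbar_yz : Rbar (y / z) by apply/intclos_divP => //; rewrite vyz.
have [r [Rr /nbar_tmul [s Rbar_s yzr]]] := R_residue Rbar_yz.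
have [u u_unit z_eq] := tX_unit_decomp Rbar_z z_neq0.
exists r; split=> //; exists (s * u); split; first exact: subringM sRbar Rbar_s (unitIn_mem u_unit).
have -> : y - r * z = (y / z - r) * z by field.
by rewrite yzr [in LHS]z_eq vyz exprS; move: (t ^+ v z) => p; ring.
Qed.

Lemma vD_t_ideal y b : Rbar y -> y != 0 -> t_ideal (v y).+1 b ->
  y + b != 0 /\ v (y + b) = v y.
Proof.
move=> Rbar_y y_neq0 [w [Rbar_w ->]]; have [u u_unit y_eq] := tX_unit_decomp Rbar_y y_neq0.
have Rbar_tw : Rbar (t * w) := subringM sRbar intclos_t Rbar_w.
have uw_unit : unitIn Rbar (u + t * w).
  apply: unitIn_notmaxid (subringD sRbar (unitIn_mem u_unit) Rbar_tw) _ => nbar_utw.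
  apply: (unitIn_maxidF u_unit); rewrite -(addrK (t * w) u).
  by apply: maxidB sRbar Rbar_local nbar_utw _; rewrite mulrC; apply: maxidM sRbar Rbar_w t_nbar.
have -> : y + w * t ^+ (v y).+1 = t ^+ v y * (u + t * w).
  by rewrite {1}y_eq exprS; move: (t ^+ v y) => p; ring.
by rewrite mulf_neq0 ?tX_neq0 ?(unitIn_neq0 uw_unit) // (v_tX_unit uw_unit (erefl _)).
Qed.

Section ValueSets.
Variable L : nat.
Implicit Types M N P : kset K.

Definition values M : {set 'I_L} :=
  [set i : 'I_L | `[< exists y, [/\ M y, y != 0 & v y = i] >]].

Lemma valuesP M i : i \in values M <-> exists y, [/\ M y, y != 0 & v y = i].
Proof. by rewrite inE; split=> /asboolP. Qed.

Lemma values_sub M N : incl M N -> values M \subset values N.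
Proof.
move=> MN; apply/subsetP => i /valuesP [y [My y_neq0 vy]].
by apply/valuesP; exists y; split=> //; apply: MN.
Qed.

Lemma values_eq M N : seteq M N -> values M = values N.
Proof. by move=> MN; apply/eqP; rewrite eqEsubset !values_sub // => x /MN. Qed.

(* Elements of P' are approximated by R-multiples of elements of P with the
   same value, until the remainder lies in t^L Rbar. *)
Lemma incl_of_values P P' : submod R P -> submod R P' -> incl P P' -> incl P' Rbar ->
  incl (t_ideal L) P -> values P' \subset values P -> incl P' P.
Proof.
move=> sP sP' PP' P'Rbar tLP vals.
suff approx k y : P' y -> t_ideal (L - k) y -> P y.
  move=> y P'y; apply: (approx L) => //; rewrite subnn expr0.
  by exists y; rewrite mulr1; split=> //; apply: P'Rbar.
elim: k y => [|k IH] y P'y; first by rewrite subn0; apply: tLP.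
have [-> _|y_neq0 tky] := eqVneq y 0; first exact: submod0 sP.
have Rbar_y := P'Rbar _ P'y.
have [le|lt] := leqP (L - k) (v y); first by apply: IH => //; apply/t_idealP.
move/(t_idealP _ Rbar_y y_neq0): tky; rewrite subnS => ge.
have vyL : (v y < L)%N by apply: leq_trans lt (leq_subr _ _).
have /valuesP [z [Pz z_neq0 /= vz]] : Ordinal vyL \in values P.
  by apply: (subsetP vals); apply/valuesP; exists y.
have Rbar_z := P'Rbar _ (PP' _ Pz).
have [r [Rr yrz]] := residue_approx Rbar_y y_neq0 Rbar_z z_neq0 (esym vz).
rewrite -(subrK (r * z) y); apply: (submodD sP _ (submodM sP Rr Pz)).
apply: IH; first exact: submodB sR sP' P'y (PP' _ (submodM sP Rr Pz)).
by apply: t_ideal_mono yrz; move: ge; case: (L - k)%N.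
Qed.

Section Chains.
Variable A : kset K.
Hypotheses (sA : subring A) (RA : incl R A) (ARbar : incl A Rbar).

Lemma strict_chain_length_le C k N M : strict_chain A C k N M ->
  incl M Rbar -> incl (t_ideal L) N -> (k <= #|values M :\: values N|)%N.
Proof.
move=> sc MRbar tLN; have mono := strict_chain_mono sc; case: sc => sC C0 Ck C_step.
have CRbar i : (i <= k)%N -> incl (C i) Rbar.
  by move=> le y /(mono _ _ le (leqnn k)) /Ck /MRbar.
have tLC i : (i <= k)%N -> incl (t_ideal L) (C i).
  by move=> le y /tLN /C0 /(mono _ _ (leq0n i) le).
have card_step i : (i <= k)%N -> (#|values N| + i <= #|values (C i)|)%N.
  elim: i => [|i IH] le; first by rewrite addn0 (values_eq C0).
  have [Ci_incl Ci_strict] := C_step i le.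
  rewrite addnS; apply: leq_ltn_trans (IH (ltnW le)) (proper_card _).
  rewrite properEneq values_sub // andbT; apply: contra_notN Ci_strict => /eqP vals.
  apply: (incl_of_values (submod_restrict RA (sC _ (ltnW le))) (submod_restrict RA (sC _ le)))
    => //; [exact: CRbar | exact: tLC (ltnW le) | by rewrite vals].
have := card_step _ (leqnn k); rewrite (values_eq Ck) cardsD.
have NM : values N \subset values M.
  by apply: values_sub => y /C0 /(mono _ _ (leq0n k) (leqnn k)) /Ck.
by rewrite (setIidPr NM) leq_subRL ?subset_leq_card // addnC.
Qed.

Definition trunc_sum N P i : kset K :=
  fun y => exists a b, [/\ N a, P b, t_ideal i b & y = a + b].

Lemma submod_trunc_sum N P i : submod A N -> submod A P -> submod A (trunc_sum N P i).
Proof.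
move=> sN sP; have stI := submod_restrict ARbar (submod_t_ideal i); split.
- exists 0, 0; rewrite addr0.
  by split; [apply: submod0 sN | apply: submod0 sP | apply: submod0 stI |].
- move=> _ _ [a1 [b1 [Na1 Pb1 tb1 ->]]] [a2 [b2 [Na2 Pb2 tb2 ->]]].
  exists (a1 + a2), (b1 + b2); rewrite addrACA; split=> //.
  + exact: submodD sN Na1 Na2.
  + exact: submodD sP Pb1 Pb2.
  + exact: submodD stI tb1 tb2.
- move=> r _ Ar [a [b [Na Pb tb ->]]]; exists (r * a), (r * b); rewrite mulrDr; split=> //.
  + exact: submodM sN Ar Na.
  + exact: submodM sP Ar Pb.
  + exact: submodM stI Ar tb.
Qed.

Lemma trunc_sum_values N P (i : 'I_L) : submod A N -> submod A P -> incl N P -> incl P Rbar ->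
  i \in values P :\: values N -> (forall j : 'I_L, j \in values P :\: values N -> (i <= j)%N) ->
  values (trunc_sum N P i.+1) :\: values N = (values P :\: values N) :\ i.
Proof.
move=> sN sP NP PRbar iD i_min.
have P'P : incl (trunc_sum N P i.+1) P.
  by move=> _ [a [b [Na Pb _ ->]]]; apply: submodD sP (NP _ Na) Pb.
apply/eqP; rewrite eqEsubset; apply/andP; split; apply/subsetP => j.
- rewrite in_setD => /andP [Nj P'j].
  rewrite in_setD1 in_setD Nj (subsetP (values_sub P'P) _ P'j) /= andbT.
  apply: contraNneq Nj => ji; move: P'j; rewrite ji.
  move=> /valuesP [y [[a [b [Na Pb tb y_ab]]] y_neq0 vy]].
  have Rbar_y : Rbar y by rewrite y_ab; apply: subringD sRbar (PRbar _ (NP _ Na)) (PRbar _ Pb).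
  have tnb : t_ideal (v y).+1 (- b) by rewrite vy; apply: submodN sRbar (submod_t_ideal _) tb.
  have [] := vD_t_ideal Rbar_y y_neq0 tnb; rewrite y_ab addrK => a_neq0 va.
  by apply/valuesP; exists a; rewrite va -y_ab.
- rewrite in_setD1 => /andP [ji jD]; move: (jD); rewrite in_setD => /andP [Nj Pj].
  rewrite in_setD Nj /=; move/valuesP: Pj => [y [Py y_neq0 vy]].
  have ij : (i < j)%N by rewrite ltn_neqAle i_min // andbT; apply: contra_neq ji => /val_inj.
  apply/valuesP; exists y; split=> //; exists 0, y; rewrite add0r.
  split=> //; first exact: submod0 sN.
  by apply/t_idealP; rewrite ?vy //; apply: PRbar.
Qed.

Lemma exists_strict_chain N : submod A N -> incl (t_ideal L) N ->
  forall n P, submod A P -> incl N P -> incl P Rbar ->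
  #|values P :\: values N| = n -> exists C, strict_chain A C n N P.
Proof.
move=> sN tLN; elim=> [|n IH] P sP NP PRbar cardD.
  have PN : incl P N.
    apply: (incl_of_values (submod_restrict RA sN) (submod_restrict RA sP)) => //.
    by rewrite -setD_eq0 -cards_eq0 cardD.
  by exists (fun=> N); split=> // x; split=> [/NP|/PN].
set D := values P :\: values N.
have [i iD i_min] : exists2 i : 'I_L, i \in D & forall j, j \in D -> (i <= j)%N.
  have /card_gt0P [i0 i0D] : (0 < #|D|)%N by rewrite cardD.
  by case: (arg_minnP (fun j : 'I_L => val j) i0D) => i; exists i.
set P' := trunc_sum N P i.+1.
have P'P : incl P' P by move=> _ [a [b [Na Pb _ ->]]]; apply: submodD sP (NP _ Na) Pb.
have NP' : incl N P'.
  move=> y Ny; exists y, 0; rewrite addr0.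
  by split=> //; [apply: submod0 sP | apply: submod0 (submod_t_ideal _)].
have D' := trunc_sum_values sN sP NP PRbar iD i_min.
have [C [sC C0 Cn C_step]] : exists C, strict_chain A C n N P'.
  apply: (IH P') => //; first exact: submod_trunc_sum.
    by move=> y /P'P /PRbar.
  by move: cardD; rewrite (cardsD1 i D) iD D' add1n => [[]].
have iP' : i \notin values P'.
  apply/negP => iP'; have /setD1P [] : i \in D :\ i.
    by rewrite -D' in_setD iP' andbT; case/setDP: iD.
  by rewrite eqxx.
exists (fun j => if (j <= n)%N then C j else P); split=> [j _|||j].
- by case: ifP => jn; [apply: sC | apply: sP].
- by rewrite leq0n.
- by rewrite ltnn.
rewrite ltnS => jn; rewrite jn; case: (ltnP j n) => [jn'|nj]; first exact: C_step.
have -> : j = n by apply/eqP; rewrite eqn_leq jn nj.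
split=> [y /Cn /P'P //|PCn]; apply: (negP iP').
apply: (subsetP (values_sub (fun y Py => (Cn y).1 (PCn y Py)))).
by case/setDP: iD.
Qed.

Lemma length_values N M : submod A N -> submod A M -> incl N M -> incl M Rbar ->
  incl (t_ideal L) N -> has_length A N M #|values M :\: values N|.
Proof.
move=> sN sM NM MRbar tLN; split=> //; first exact: exists_strict_chain.
by move=> C k sc; apply: strict_chain_length_le sc MRbar tLN.
Qed.

End Chains.
End ValueSets.

Section Conductor.
Hypotheses (R_local : local R) (R_dim : dim_one R) (R_not_DVR : ~ is_DVR R).
Local Notation S := (colon m m).
Local Notation c := (colon R Rbar).
Local Notation cS := (colon S (intclos S)).

Lemma maxid_intclos y : m y -> Rbar y. Proof. by case=> Ry _; apply: (intclos_incl sR Ry). Qed.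

Lemma S_intclos : incl S Rbar.
Proof.
move=> s Ss; have [x [m_x x_neq0]] := R_dim.1.
apply: (intclos_of_stable sR R_frac R_noeth Rbar_fin (M := m)) => //; last by exists x.
- exact: (ideal_maxid sR R_local).1.
- exact: maxid_intclos.
Qed.

Lemma subring_S : subring S.
Proof.
split; first by move=> y m_y; rewrite mul1r.
  by move=> a b Sa Sb y m_y; rewrite mulrBl; apply: maxidB sR R_local (Sa _ m_y) (Sb _ m_y).
by move=> a b Sa Sb y m_y; rewrite -mulrA; apply/Sa/Sb.
Qed.

Lemma R_sub_S : incl R S. Proof. by move=> r Rr y m_y; apply: maxidM sR Rr m_y. Qed.

Lemma cSE z : cS z <-> forall y, Rbar y -> S (z * y).
Proof.
have intclosS := intclos_intermediate sR R_sub_S S_intclos.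
by split=> cSz y /intclosS; apply: cSz.
Qed.

Lemma DVR_of_intclos_sub : incl Rbar R -> is_DVR R.
Proof.
move=> RbarR; split=> //; first by case: R_dim.
move=> I [sI IR]; case: (pselect (exists y, I y /\ y != 0)) => [[y0 [Iy0 y0_neq0]]|I0].
  have ex : exists k, `[< exists y, [/\ I y, y != 0 & v y = k] >].
    by exists (v y0); apply/asboolP; exists y0.
  case: (ex_minnP ex) => k /asboolP [g [Ig g_neq0 vg]] k_min.
  have Rbar_I y : I y -> Rbar y by move=> Iy; apply/(intclos_incl sR)/IR.
  exists g; split; first exact: IR.
  move=> y; split=> [Iy|[r [Rr ->]]]; last exact: submodM sI Rr Ig.
  have [-> | y_neq0] := eqVneq y 0; first by exists 0; rewrite mul0r; split=> //; apply: subring0.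
  exists (y / g); rewrite divfK //; split=> //; apply: RbarR.
  apply/(intclos_divP (Rbar_I _ Ig) g_neq0 (Rbar_I _ Iy) y_neq0).
  by rewrite vg; apply: k_min; apply/asboolP; exists y.
exists 0; split; first exact: subring0 sR.
move=> y; split=> [Iy|[r [_ ->]]]; last by rewrite mulr0; apply: submod0 sI.
exists 0; rewrite mul0r; split; first exact: subring0 sR.
by apply: contrapT => /eqP y_neq0; apply: I0; exists y.
Qed.

Lemma conductor_R w : c w -> R w.
Proof. by move=> cw; rewrite -[w]mulr1; apply: cw; apply: subring1 sRbar. Qed.

Lemma conductor_nbar w : c w -> nbar w.
Proof.
move=> cw; have Rbar_w := intclos_incl sR (conductor_R cw).
apply: contrapT => /(unitIn_notmaxid Rbar_w) [_ w_neq0 Rbar_wi].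
apply/R_not_DVR/DVR_of_intclos_sub => z Rbar_z.
by rewrite -[z](mulVKf w_neq0); apply: cw; apply: subringM sRbar Rbar_wi Rbar_z.
Qed.

Lemma submod_conductor : submod R c.
Proof.
split; first by move=> y _; rewrite mul0r; apply: subring0 sR.
  by move=> a b ca cb y Rbar_y; rewrite mulrDl; apply: subringD sR (ca _ Rbar_y) (cb _ Rbar_y).
by move=> r a Rr ca y Rbar_y; rewrite -mulrA; apply: subringM sR Rr (ca _ Rbar_y).
Qed.

Lemma conductor_S : incl c S.
Proof.
move=> w cw y m_y; apply: (maxid_intclos_contract sR); first by apply: cw; apply: maxid_intclos.
by rewrite mulrC; apply: maxidM sRbar (maxid_intclos m_y) (conductor_nbar cw).
Qed.

Lemma conductor_cS : incl c cS.
Proof.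
move=> w cw; apply/cSE => y Rbar_y; apply: conductor_S => z Rbar_z.
by rewrite -mulrA; apply: cw; apply: subringM sRbar Rbar_y Rbar_z.
Qed.

Lemma cS_S : incl cS S.
Proof. by move=> z /cSE cSz; rewrite -[z]mulr1; apply: cSz; apply: subring1 sRbar. Qed.

Lemma submod_cS : submod S cS.
Proof.
split; first by apply/cSE => y _; rewrite mul0r; apply: subring0 subring_S.
  move=> a b /cSE ca /cSE cb; apply/cSE => y Rbar_y; rewrite mulrDl.
  exact: subringD subring_S (ca _ Rbar_y) (cb _ Rbar_y).
move=> s a Ss /cSE ca; apply/cSE => y Rbar_y; rewrite -mulrA.
exact: subringM subring_S Ss (ca _ Rbar_y).
Qed.

Lemma exists_t_ideal_conductor : exists l, incl (t_ideal l) c.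
Proof.
have [d d_neq0 d_cond] := fin_gen_denominator sR R_frac Rbar_fin.
have Rbar_d : Rbar d.
  by apply: (intclos_incl sR); rewrite -[d]mulr1; apply: d_cond; apply: subring1 sRbar.
have [u u_unit d_eq] := tX_unit_decomp Rbar_d d_neq0.
exists (v d) => _ [w [Rbar_w ->]] y Rbar_y.
have -> : w * t ^+ v d * y = d * (u^-1 * w * y).
  by move: (t ^+ v d) d_eq => p ->; field; apply: unitIn_neq0 u_unit.
apply: d_cond; apply: subringM sRbar _ Rbar_y; apply: subringM sRbar _ Rbar_w.
exact: unitIn_mem (unitInV u_unit).
Qed.

Definition min_val x := [/\ m x, x != 0 & forall y, m y -> Rbar (y / x)].

Lemma exists_min_val : exists x, min_val x.
Proof.
have ex : exists k, `[< exists y, [/\ m y, y != 0 & v y = k] >].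
  by have [y [m_y y_neq0]] := R_dim.1; exists (v y); apply/asboolP; exists y.
case: (ex_minnP ex) => k /asboolP [x [m_x x_neq0 vx]] k_min.
exists x; split=> // y m_y; have [-> | y_neq0] := eqVneq y 0.
  by rewrite mul0r; apply: subring0 sRbar.
apply/(intclos_divP (maxid_intclos m_x) x_neq0 (maxid_intclos m_y) y_neq0).
by rewrite vx; apply: k_min; apply/asboolP; exists y.
Qed.

Lemma min_val_t_ideal x y : min_val x -> m y -> t_ideal (v x) y.
Proof.
case=> m_x x_neq0 mx_div m_y; have [-> | y_neq0] := eqVneq y 0.
  exact: submod0 (submod_t_ideal _).
apply/(t_idealP _ (maxid_intclos m_y) y_neq0).
exact/(intclos_divP (maxid_intclos m_x) x_neq0 (maxid_intclos m_y) y_neq0)/mx_div.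
Qed.

Lemma min_val_v_gt0 x : min_val x -> (0 < v x)%N.
Proof.
case=> m_x x_neq0 _; apply/(t_idealP _ (maxid_intclos m_x) x_neq0).
exact/nbar_t_ideal1/maxid_sub_intclos.
Qed.

Lemma min_val_cS x w : min_val x -> c w -> cS (w / x).
Proof.
case=> m_x x_neq0 mx_div cw; apply/cSE => y Rbar_y z m_z.
have -> : w / x * y * z = w * (y * (z / x)) by field.
have Rbar_yzx : Rbar (y * (z / x)) by apply: subringM sRbar Rbar_y (mx_div _ m_z).
apply: (maxid_intclos_contract sR); first exact: cw.
by rewrite mulrC; apply: maxidM sRbar Rbar_yzx (conductor_nbar cw).
Qed.

Lemma powS_t_ideal x n y : min_val x -> powS R m n y -> t_ideal (n * v x) y.
Proof.
move=> x_min; elim: n y => [|n IH] y /=.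
  by move=> Ry; exists y; rewrite mul0n expr0 mulr1; split=> //; apply: (intclos_incl sR).
case=> s [s_mS ->]; apply: submod_sum (submod_t_ideal _) _ => p /s_mS [m_p1 pow_p2] _.
by rewrite mulSn; apply: t_idealM (min_val_t_ideal x_min m_p1) (IH _ pow_p2).
Qed.

(* If x were not in J, then J would lie in x m, hence J m^n in t^((n+1) v x + 1)
   Rbar, which cannot contain x^(n+1). *)
Lemma min_val_mem_reduction x J : min_val x -> reduction R J m -> incl J (principal R x) -> J x.
Proof.
move=> x_min [[sJ _] _ [n Jmn]] Jx_incl; have [m_x x_neq0 _] := x_min.
apply: contrapT => nJx.
have [s [s_Jm xn_eq]] := (Jmn (x ^+ n.+1)).2 (powS_exp _ sR m_x).
have : t_ideal (n.+1 * v x).+1 (x ^+ n.+1).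
  rewrite xn_eq; apply: submod_sum (submod_t_ideal _) _ => p /s_Jm [Jp1 pow_p2] _.
  have [r [Rr p1_eq]] := Jx_incl _ Jp1.
  have m_r : m r.
    split=> // -[_ r_neq0 Rri]; apply: nJx.
    by rewrite -[x](mulKf r_neq0) -p1_eq; apply: submodM sJ Rri Jp1.
  have t_p1 : t_ideal (1 + v x) p.1.
    rewrite p1_eq; apply: (t_idealM _ (min_val_t_ideal x_min m_x)).
    exact/nbar_t_ideal1/maxid_sub_intclos.
  apply: t_ideal_mono (t_idealM t_p1 (powS_t_ideal x_min pow_p2)).
  by rewrite mulSn add1n addSn.
have Rbar_xn : Rbar (x ^+ n.+1) by apply: subringX sRbar (maxid_intclos m_x).
move/(t_idealP _ Rbar_xn (expf_neq0 _ x_neq0)).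
by rewrite vX ?ltnn //; apply: maxid_intclos.
Qed.

Lemma maxid_sq_principal x : m x -> x != 0 -> (forall z, m z -> S (z / x)) ->
  seteq (mulS m m) (mulS (principal R x) m).
Proof.
move=> m_x x_neq0 mx_S y; split; last exact: mulS_mono (principal_maxid sR m_x) (fun z mz => mz) y.
case=> s [s_mm ->]; exists [seq (x, p.1 / x * p.2) | p <- s]; split.
  move=> _ /mapP [q /s_mm [m_q1 m_q2] ->] /=; split; last exact: mx_S.
  by exists 1; rewrite mul1r; split=> //; apply: subring1.
by rewrite big_map; apply: eq_bigr => p _ /=; rewrite mulrCA mulrA divfK.
Qed.

Lemma minimal_multiplicity_of_min_val x : min_val x -> (forall z, m z -> S (z / x)) ->
  minimal_multiplicity R.
Proof.
move=> x_min mx_S; have [m_x x_neq0 _] := x_min.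
have m2 := maxid_sq_principal m_x x_neq0 mx_S.
have mR := mulS_ideal sR (ideal_maxid sR R_local).
exists x; split=> //; split.
  split; [exact: principal_ideal sR m_x.1 | exact: principal_maxid sR m_x |].
  exists 1%N => y /=; have e1 := mulS_seteq (fun z => iff_refl (principal R x z)) mR y.
  have e2 := mulS_seteq (fun z => iff_refl (m z)) mR y.
  by split=> [/e1 /(m2 y).2 /e2.2 | /e2 /(m2 y).1 /e1.2].
move=> J J_red J_sub y; split=> [/J_sub //|[r [Rr ->]]].
have [[sJ _] _ _] := J_red.
exact: submodM sJ Rr (min_val_mem_reduction x_min J_red J_sub).
Qed.

Lemma min_val_of_minimal_multiplicity :
  minimal_multiplicity R -> exists x, min_val x /\ forall z, m z -> S (z / x).
Proof.
case=> q [[[_ q_sub_m _] _] m2].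
have m_q : m q by apply: q_sub_m; exists 1; rewrite mul1r; split=> //; apply: subring1.
have q_neq0 : q != 0.
  have [x0 [m_x0 x0_neq0]] := R_dim.1; apply: contra_neq (mulf_neq0 x0_neq0 x0_neq0) => q0.
  have [s [s_qm ->]] := (m2 _).1 (mulS_pair m_x0 m_x0).
  by rewrite big1_seq // => p /andP [_ /s_qm [[r [_ ->]] _]]; rewrite q0 mulr0 mul0r.
have mq_S z : m z -> S (z / q).
  move=> m_z y m_y; have [s [s_qm zy_eq]] := (m2 _).1 (mulS_pair m_z m_y).
  rewrite mulrAC zy_eq mulr_suml; apply: submod_sum (ideal_maxid sR R_local).1 _.
  move=> p /s_qm [[r [Rr ->]] m_p2] _.
  by rewrite mulrAC mulfK //; apply: maxidM sR Rr m_p2.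
by exists q; split=> //; split=> // y /mq_S /S_intclos.
Qed.

Section Counting.
Variable l : nat.
Hypothesis t_ideal_conductor : incl (t_ideal l) c.
Local Notation L := l.+1.
Local Notation values := (values L).

Definition valsS := values S :\: values cS.
Definition valsR := values R :\: values c.
Definition shift x (i : 'I_L) : 'I_L := inord (i + v x).

Lemma t_ideal_L_conductor : incl (t_ideal L) c.
Proof. by move=> z /(t_ideal_mono (leqnSn l)) /t_ideal_conductor. Qed.

Lemma length_valsS : has_length S cS S #|valsS|.
Proof.
apply: length_values; [exact: R_sub_S | exact: S_intclos | exact: submod_cS |
  exact: subring_submod subring_S | exact: cS_S | exact: S_intclos |].
by move=> y /t_ideal_L_conductor /conductor_cS.
Qed.

Lemma length_valsR : has_length R c R #|valsR|.
Proof.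
apply: length_values; [by [] | exact: intclos_incl | exact: submod_conductor |
  exact: subring_submod | exact: conductor_R | exact: intclos_incl |].
exact: t_ideal_L_conductor.
Qed.

Lemma ord0_valsR : ord0 \in valsR.
Proof.
rewrite in_setD; apply/andP; split.
  apply/negP => /valuesP [w [cw w_neq0 vw]].
  have := conductor_nbar cw; rewrite nbar_t_ideal1.
  by move/(t_idealP _ (intclos_incl sR (conductor_R cw)) w_neq0); rewrite vw.
apply/valuesP; exists 1; rewrite oner_neq0 (v_unitIn (unitIn1 sRbar)).
by split=> //; apply: subring1.
Qed.

Lemma cS_value_of_conductor x w i : min_val x -> c w -> w != 0 -> v w = (i + v x)%N ->
  exists y, [/\ cS y, y != 0 & v y = i].
Proof.
move=> x_min cw w_neq0 vw; have [m_x x_neq0 _] := x_min.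
have Rbar_w := intclos_incl sR (conductor_R cw).
have le : (v x <= v w)%N by rewrite vw leq_addl.
have [_ wx_neq0 vwx] := v_div (maxid_intclos m_x) x_neq0 Rbar_w w_neq0 le.
by exists (w / x); rewrite vwx vw addnK; split=> //; apply: min_val_cS.
Qed.

Lemma shift_valsS x i : min_val x -> i \in valsS ->
  [/\ (i + v x < L)%N, val (shift x i) = (i + v x)%N & shift x i \in valsR :\ ord0].
Proof.
move=> x_min; rewrite in_setD => /andP [i_cS /valuesP [s [Ss s_neq0 vs]]].
have [m_x x_neq0 _] := x_min.
have m_sx : m (s * x) := Ss _ m_x.
have sx_neq0 : s * x != 0 := mulf_neq0 s_neq0 x_neq0.
have vsx : v (s * x) = (i + v x)%N.
  by rewrite (vM (S_intclos Ss) s_neq0 (maxid_intclos m_x) x_neq0) vs.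
have lt : (i + v x < L)%N.
  rewrite ltnNge; apply: contraNN i_cS => le; apply/valuesP; exists s; split=> //.
  have c_sx : c (s * x).
    by apply/t_ideal_L_conductor/(t_idealP _ (maxid_intclos m_sx) sx_neq0); rewrite vsx.
  by have := min_val_cS x_min c_sx; rewrite mulfK.
have vshift : val (shift x i) = (i + v x)%N by rewrite /shift /= inordK.
split=> //; rewrite in_setD1 in_setD; apply/and3P; split.
- apply: contraTneq (min_val_v_gt0 x_min) => /(congr1 val); rewrite vshift /=.
  by move/eqP; rewrite addn_eq0 => /andP [_ /eqP ->].
- apply: contraNN i_cS => /valuesP [w [cw w_neq0 vw]]; apply/valuesP.
  by apply: cS_value_of_conductor x_min cw w_neq0 _; rewrite vw vshift.
- by apply/valuesP; exists (s * x); split=> //; [case: m_sx | rewrite vsx vshift].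
Qed.

Lemma shift_injective x : min_val x -> {in valsS &, injective (shift x)}.
Proof.
move=> x_min i j iS jS ij; have [_ vi _] := shift_valsS x_min iS.
have [_ vj _] := shift_valsS x_min jS.
by apply/val_inj/eqP; rewrite -(eqn_add2r (v x)) -vi -vj ij.
Qed.

Lemma shift_valsS_sub x : min_val x -> shift x @: valsS \subset valsR :\ ord0.
Proof. by move=> x_min; apply/subsetP => _ /imsetP [i iS ->]; case: (shift_valsS x_min iS). Qed.

Lemma card_valsR : #|valsR| = (#|valsR :\ ord0|).+1.
Proof. by rewrite (cardsD1 ord0 valsR) ord0_valsR. Qed.

Lemma card_valsS_lt : (#|valsS| < #|valsR|)%N.
Proof.
have [x x_min] := exists_min_val.
rewrite card_valsR ltnS -(card_in_imset (shift_injective x_min)).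
by rewrite subset_leq_card ?shift_valsS_sub.
Qed.

Lemma conductor_of_cS x z : m x -> cS z -> c (x * z).
Proof.
move=> m_x /cSE cSz u Rbar_u; rewrite -mulrA mulrC.
by have [] := cSz u Rbar_u x m_x.
Qed.

Lemma card_valsS_of_maxid_div x : min_val x -> (forall z, m z -> S (z / x)) ->
  #|valsS| = #|valsR|.-1.
Proof.
move=> x_min mx_S; have [m_x x_neq0 _] := x_min; rewrite card_valsR /=.
suff -> : valsR :\ ord0 = shift x @: valsS by rewrite (card_in_imset (shift_injective x_min)).
apply/eqP; rewrite eq_sym eqEsubset shift_valsS_sub //=; apply/subsetP => j.
rewrite in_setD1 in_setD => /and3P [j_neq0 j_c /valuesP [w [Rw w_neq0 vw]]].
have Rbar_w := intclos_incl sR Rw.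
have m_w : m w.
  apply: (maxid_intclos_contract sR Rw); apply/nbar_t_ideal1/(t_idealP _ Rbar_w w_neq0).
  by rewrite vw lt0n; apply: contraNneq j_neq0 => j0; apply/eqP/val_inj.
have le := (t_idealP _ Rbar_w w_neq0).1 (min_val_t_ideal x_min m_w).
have [Rbar_y y_neq0 vy] := v_div (maxid_intclos m_x) x_neq0 Rbar_w w_neq0 le.
have yL : (v (w / x) < L)%N by rewrite vy; apply: leq_ltn_trans (leq_subr _ _) _; rewrite vw.
apply/imsetP; exists (Ordinal yL); last by apply/val_inj; rewrite /= inordK /= vy subnK // vw.
rewrite /valsS in_setD; apply/andP; split; last first.
  by apply/valuesP; exists (w / x); split=> //; apply: mx_S.
apply: contraNN j_c => /valuesP [z [cSz z_neq0 /= vz]]; apply/valuesP; exists (x * z).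
split; [exact: conductor_of_cS | exact: mulf_neq0 |].
by rewrite (vM (maxid_intclos m_x) x_neq0 (S_intclos (cS_S cSz)) z_neq0) vz vy subnKC.
Qed.

Definition maxid_div x : kset K := fun y => exists2 z, m z & y = z / x.

Lemma submod_maxid_div x : submod R (maxid_div x).
Proof.
split; first by exists 0; rewrite ?mul0r //; apply: maxid0.
  by move=> _ _ [z1 m1 ->] [z2 m2 ->]; exists (z1 + z2); rewrite ?mulrDl //; apply: R_local.
by move=> r _ Rr [z m_z ->]; exists (r * z); rewrite ?mulrA //; apply: maxidM.
Qed.

Lemma values_maxid_div_sub x : min_val x -> valsR :\ ord0 = shift x @: valsS ->
  values (maxid_div x) \subset values S.
Proof.
move=> x_min onto; have [m_x x_neq0 mx_div] := x_min; have valscS := values_sub L cS_S.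
apply/subsetP => k /valuesP [_ [[z m_z ->] zx_neq0 vzx]].
have z_neq0 : z != 0 by apply: contraNneq zx_neq0 => ->; rewrite mul0r.
have Rbar_z := maxid_intclos m_z.
have le := (t_idealP _ Rbar_z z_neq0).1 (min_val_t_ideal x_min m_z).
have [_ _ vzx'] := v_div (maxid_intclos m_x) x_neq0 Rbar_z z_neq0 le.
have vz : v z = (k + v x)%N by rewrite -vzx vzx' subnK.
have [Lj|jL] := leqP L (k + v x).
  have c_z : c z by apply/t_ideal_L_conductor/(t_idealP _ Rbar_z z_neq0); rewrite vz.
  by apply/valuesP; exists (z / x); split=> //; apply/cS_S/min_val_cS.
have [j_c|j_c] := boolP (Ordinal jL \in values c).
  case/valuesP: j_c => w [cw w_neq0 vw]; apply: (subsetP valscS); apply/valuesP.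
  exact: cS_value_of_conductor x_min cw w_neq0 vw.
have : Ordinal jL \in valsR :\ ord0.
  rewrite in_setD1 in_setD j_c /=; apply/andP; split.
    apply: contraTneq (min_val_v_gt0 x_min) => /(congr1 val) /= /eqP.
    by rewrite addn_eq0 => /andP [_ /eqP ->].
  by apply/valuesP; exists z; split=> //; case: m_z.
rewrite onto => /imsetP [i iS /(congr1 val) /=]; have [_ -> _] := shift_valsS x_min iS.
by move/eqP; rewrite eqn_add2r => /eqP /val_inj ->; case/setDP: iS.
Qed.

Lemma maxid_div_S_of_card x : min_val x -> #|valsS| = #|valsR|.-1 ->
  forall z, m z -> S (z / x).
Proof.
move=> x_min card_eq; have [m_x x_neq0 mx_div] := x_min.
have onto : valsR :\ ord0 = shift x @: valsS.
  apply/eqP; rewrite eq_sym eqEcard shift_valsS_sub //= (card_in_imset (shift_injective x_min)).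
  by rewrite card_eq card_valsR.
have mxS : incl (maxid_div x) S.
  apply: (incl_of_values (submod_restrict R_sub_S (subring_submod subring_S)) (submod_maxid_div x)).
  - by move=> s Ss; exists (s * x); rewrite ?mulfK //; apply: Ss.
  - by move=> _ [z m_z ->]; apply: mx_div.
  - by move=> y /t_ideal_L_conductor /conductor_S.
  - exact: values_maxid_div_sub.
by move=> z m_z; apply: mxS; exists z.
Qed.

Lemma card_valsS_eq_iff : #|valsS| = #|valsR|.-1 <-> minimal_multiplicity R.
Proof.
split=> [card_eq | /min_val_of_minimal_multiplicity [y [y_min my_S]]].
  have [x x_min] := exists_min_val.
  exact: minimal_multiplicity_of_min_val x_min (maxid_div_S_of_card x_min card_eq).
exact: card_valsS_of_maxid_div y_min my_S.
Qed.

End Counting.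
End Conductor.
End Valuation.

Theorem lemma6p8 (K : fieldType) (R : K -> Prop) :
  subring R -> frac_field_of R -> noetherian R -> local R -> dim_one R ->
  (* analytically irreducible: Rbar is a finite R-module and local *)
  fin_gen R (intclos R) -> local (intclos R) ->
  residue_iso R -> ~ is_DVR R ->
  let m := maxid R in
  let S := colon m m in
  let c := colon R (intclos R) in
  let cS := colon S (intclos S) in
  exists a b : nat,
    [/\ has_length S cS S a, has_length R c R b, (a < b)%N
      & a = b.-1 <-> minimal_multiplicity R].
Proof.
move=> sR R_frac R_noeth R_local R_dim Rbar_fin Rbar_local R_residue R_not_DVR m S c cS.
have [t [t_nbar t_neq0 nbar_tmul]] :=
  exists_uniformizer sR R_frac R_noeth R_local R_dim Rbar_fin Rbar_local R_residue.
have [l tl_c] := exists_t_ideal_conductor sR R_frac R_noeth Rbar_fin t_nbar t_neq0 nbar_tmul.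
exists #|valsS R t l|, #|valsR R t l|; split.
- by apply: length_valsS.
- by apply: length_valsR.
- by apply: card_valsS_lt.
- by apply: card_valsS_eq_iff.
Qed.
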